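(* Let $(\mathcal{A},\mathcal{E})$ be a finite, essentially small exact category. Then $\mu_\mathcal{E}:(\mathrm{ind}\mathcal{A},\subset_\mathcal{E})\to(\mathfrak{S}(\mathbb{N}),\lll)$ is a Gabriel–Roiter measure, i.e.: (GR1) $\mu_\mathcal{E}$ is order-preserving; (GR2) $\mu_\mathcal{E}(X)=\mu_\mathcal{E}(Y)$ implies $l_\mathcal{E}(X)=l_\mathcal{E}(Y)$ for all $X,Y\in\mathrm{ind}\mathcal{A}$; (GR3) if $X,Y\in\mathrm{ind}\mathcal{A}$ satisfy $l_\mathcal{E}(X)\ge l_\mathcal{E}(Y)$ and $\mu_\mathcal{E}(X')\lll\mu_\mathcal{E}(Y)$ with $\mu_\mathcal{E}(X')\ne\mu_\mathcal{E}(Y)$ for every indecomposable $X'\subsetneq_\mathcal{E}X$, then $\mu_\mathcal{E}(X)\lll\mu_\mathcal{E}(Y)$.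
   Context: $(\mathcal{A},\mathcal{E})$ is a Quillen exact category; admissible monics are morphisms $i$ with $(i,d)\in\mathcal{E}$ for some $d$. $X\subset_\mathcal{E}Y$ means there is an admissible monic $X\to Y$; $X\subsetneq_\mathcal{E}Y$ means there is one that is not an isomorphism. The $\mathcal{E}$-length $l_\mathcal{E}(X)$ is the supremum of all $n$ such that there is a chain $0=X_0\to\cdots\to X_n=X$ of admissible monics none of which is an isomorphism; $(\mathcal{A},\mathcal{E})$ is finite if $l_\mathcal{E}(X)<\infty$ for all $X$. $\mathrm{ind}\mathcal{A}$ is the set of isomorphism classes of indecomposable objects, partially ordered by $\subset_\mathcal{E}$. $\mathfrak{S}(\mathbb{N})$ is the set of finite nonempty sequences of natural numbers, totally ordered by: $x\lll y$ iff $x=y$, or $x$ is a proper prefix of $y$, or at the first index $i$ where $x_i\neq y_i$ (both defined) one has $x_i>y_i$. For indecomposable $X$, $\mu_\mathcal{E}(X)$ is the $\lll$-maximum of $(l_\mathcal{E}(X_1),\dots,l_\mathcal{E}(X_n))$ over all chains $X_1\subsetneq_\mathcal{E}\cdots\subsetneq_\mathcal{E}X_n=X$ ($n\ge1$) with all $X_i$ indecomposable. *)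

From HB Require Import structures.
From mathcomp Require Import all_boot all_order all_algebra.
From Stdlib Require Import ClassicalEpsilon.

Set Implicit Arguments.
Unset Strict Implicit.
Unset Printing Implicit Defensive.
Import GRing.Theory.
Local Open Scope ring_scope.

Record PreAddCat := {
  Obj :> Type;
  Hom : Obj -> Obj -> zmodType;
  comp : forall (X Y Z : Obj), Hom Y Z -> Hom X Y -> Hom X Z;
  idm : forall X : Obj, Hom X X;
  compA : forall (X Y Z W : Obj) (f : Hom Z W) (g : Hom Y Z) (h : Hom X Y),
      comp f (comp g h) = comp (comp f g) h;
  comp1m : forall (X Y : Obj) (f : Hom X Y), comp (idm Y) f = f;
  compm1 : forall (X Y : Obj) (f : Hom X Y), comp f (idm X) = f;
  compDl : forall (X Y Z : Obj) (f g : Hom Y Z) (h : Hom X Y),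
      comp (f + g) h = comp f h + comp g h;
  compDr : forall (X Y Z : Obj) (f : Hom Y Z) (g h : Hom X Y),
      comp f (g + h) = comp f g + comp f h
}.
Arguments Hom {_}.
Arguments comp {_ X Y Z}.
Arguments idm {_}.

Section Basic.
Variable C : PreAddCat.

Definition IsZero (Z : C) : Prop := idm Z = 0.

Definition IsIso (X Y : C) (f : Hom X Y) : Prop :=
  exists g : Hom Y X, comp g f = idm X /\ comp f g = idm Y.

Definition IsBiprod (X Y B : C) (i1 : Hom X B) (i2 : Hom Y B)
    (p1 : Hom B X) (p2 : Hom B Y) : Prop :=
  [/\ comp p1 i1 = idm X, comp p2 i2 = idm Y, comp p1 i2 = 0,
      comp p2 i1 = 0 & comp i1 p1 + comp i2 p2 = idm B].

Definition IsKernel (A B D : C) (i : Hom A B) (d : Hom B D) : Prop :=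
  comp d i = 0 /\
  forall (T : C) (g : Hom T B), comp d g = 0 ->
    exists h : Hom T A, comp i h = g /\ forall h' : Hom T A, comp i h' = g -> h' = h.

Definition IsCokernel (A B D : C) (i : Hom A B) (d : Hom B D) : Prop :=
  comp d i = 0 /\
  forall (T : C) (g : Hom B T), comp g i = 0 ->
    exists h : Hom D T, comp h d = g /\ forall h' : Hom D T, comp h' d = g -> h' = h.

Definition IsPushout (A B A' B' : C) (i : Hom A B) (f : Hom A A')
    (i' : Hom A' B') (f' : Hom B B') : Prop :=
  comp f' i = comp i' f /\
  forall (T : C) (u : Hom B T) (v : Hom A' T), comp u i = comp v f ->
    exists w : Hom B' T, (comp w f' = u /\ comp w i' = v) /\
      forall w' : Hom B' T, comp w' f' = u -> comp w' i' = v -> w' = w.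

Definition IsPullback (B D B' D' : C) (d : Hom B D) (g : Hom D' D)
    (d' : Hom B' D') (g' : Hom B' B) : Prop :=
  comp d g' = comp g d' /\
  forall (T : C) (u : Hom T B) (v : Hom T D'), comp d u = comp g v ->
    exists w : Hom T B', (comp g' w = u /\ comp d' w = v) /\
      forall w' : Hom T B', comp g' w' = u -> comp d' w' = v -> w' = w.

End Basic.

Record AddCat := {
  pacat :> PreAddCat;
  has_zero : exists Z : pacat, IsZero Z;
  has_biprod : forall X Y : pacat, exists (B : pacat) (i1 : Hom X B) (i2 : Hom Y B)
      (p1 : Hom B X) (p2 : Hom B Y), IsBiprod i1 i2 p1 p2
}.

Section ExactDefs.
Variable C : PreAddCat.
Variable E : forall A B D : C, Hom A B -> Hom B D -> Prop.

Definition AdmMono (A B : C) (i : Hom A B) : Prop :=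
  exists (D : C) (d : Hom B D), E i d.
Definition AdmEpi (B D : C) (d : Hom B D) : Prop :=
  exists (A : C) (i : Hom A B), E i d.

Definition exact_axioms : Prop :=
  (forall (A B D : C) (i : Hom A B) (d : Hom B D),
      E i d -> IsKernel i d /\ IsCokernel i d) /\
  (forall (A B D A' B' D' : C) (i : Hom A B) (d : Hom B D)
          (i' : Hom A' B') (d' : Hom B' D')
          (a : Hom A A') (b : Hom B B') (c : Hom D D'),
      IsIso a -> IsIso b -> IsIso c ->
      comp b i = comp i' a -> comp c d = comp d' b ->
      E i d -> E i' d') /\
  (forall A : C, AdmMono (idm A)) /\
  (forall A : C, AdmEpi (idm A)) /\
  (forall (A B D : C) (f : Hom A B) (g : Hom B D),
      AdmMono f -> AdmMono g -> AdmMono (comp g f)) /\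
  (forall (A B D : C) (f : Hom A B) (g : Hom B D),
      AdmEpi f -> AdmEpi g -> AdmEpi (comp g f)) /\
  (forall (A B A' : C) (i : Hom A B) (f : Hom A A'), AdmMono i ->
      exists (B' : C) (i' : Hom A' B') (f' : Hom B B'),
        IsPushout i f i' f' /\ AdmMono i') /\
  (forall (B D D' : C) (d : Hom B D) (g : Hom D' D), AdmEpi d ->
      exists (B' : C) (d' : Hom B' D') (g' : Hom B' B),
        IsPullback d g d' g' /\ AdmEpi d').

End ExactDefs.

Record ExactCat := {
  acat :> AddCat;
  Ex : forall A B D : acat, Hom A B -> Hom B D -> Prop;
  Ex_axioms : exact_axioms Ex
}.

Section Length.
Variable C : ExactCat.

Definition SubE (X Y : C) : Prop := exists i : Hom X Y, AdmMono (@Ex C) i.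
Definition SubNeqE (X Y : C) : Prop :=
  exists i : Hom X Y, AdmMono (@Ex C) i /\ ~ IsIso i.

Inductive EChain : C -> nat -> Prop :=
| EChain0 (Z : C) : IsZero Z -> EChain Z 0
| EChainS (X Y : C) (n : nat) : EChain X n -> SubNeqE X Y -> EChain Y n.+1.

(* l_E(X) = sup { n | EChain X n } (the maximum; well defined when the
   category is finite, which is assumed in the theorem) *)
Definition lengthE (X : C) : nat :=
  epsilon (inhabits 0%N)
    (fun n => EChain X n /\ forall m, EChain X m -> (m <= n)%N).

Definition finiteE : Prop :=
  forall X : C, exists n : nat, forall m, EChain X m -> (m <= n)%N.

Definition Indec (X : C) : Prop :=
  ~ IsZero X /\
  forall (Y Z : C) (i1 : Hom Y X) (i2 : Hom Z X) (p1 : Hom X Y) (p2 : Hom X Z),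
    IsBiprod i1 i2 p1 p2 -> IsZero Y \/ IsZero Z.

End Length.

Definition slex (x y : seq nat) : Prop :=
  x = y \/
  (exists z : seq nat, z <> [::] /\ y = x ++ z) \/
  (exists i : nat, (i < size x)%N /\ (i < size y)%N /\
     take i x = take i y /\ (nth 0%N y i < nth 0%N x i)%N).

Section Mu.
Variable C : ExactCat.

(* IndChain s X : there is a chain X_1 \subsetneq_E ... \subsetneq_E X_n = X
   of indecomposables with s = (l_E(X_1), ..., l_E(X_n)) *)
Inductive IndChain : seq nat -> C -> Prop :=
| IndChain1 (X : C) : Indec X -> IndChain [:: lengthE X] X
| IndChainS (s : seq nat) (X Y : C) :
    IndChain s X -> SubNeqE X Y -> Indec Y -> IndChain (rcons s (lengthE Y)) Y.

Definition muE (X : C) : seq nat :=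
  epsilon (inhabits [:: 0%N])
    (fun s => IndChain s X /\ forall t, IndChain t X -> slex t s).

End Mu.

(* By finiteness every object has a longest E-chain, and l_E strictly increases
   along admissible monics that are not isomorphisms.  Hence the length
   sequence of a chain of indecomposables ending at X has at most l_E(X) + 1
   entries, all bounded by l_E(X), so the <<<-maximum mu_E(X) exists; it ends
   with l_E(X), which gives (GR2).  For (GR1), an admissible monic X -> Y that
   is an isomorphism transports chains from X to Y, and otherwise mu_E(X)
   followed by l_E(Y) is a chain for Y extending mu_E(X).  For (GR3), mu_E(X)
   is the sequence s of a chain ending at some indecomposable X' subsetneq X,
   followed by l_E(X); s <<< mu_E(X') is strictly below mu_E(Y), and appending
   l_E(X), which bounds every entry of mu_E(Y), keeps it below mu_E(Y). *)
From HB Require Import structures.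
From mathcomp Require Import all_boot all_order all_algebra.
From Stdlib Require Import Classical ClassicalEpsilon.

Set Implicit Arguments.
Unset Strict Implicit.
Unset Printing Implicit Defensive.
Import Order.Theory GRing.Theory.

(* The order <<< is the lexicographic order of seqlexi for the reversed order
   on nat: a proper prefix lies below its extensions, a larger entry below a
   smaller one. *)
Notation GRseq := (seqlexi nat^d).

Lemma leEnat_dual (a b : nat) : ((a : nat^d) <= b)%O = (b <= a).
Proof. by []. Qed.

Lemma lexiGR_cons a b s t :
  (a :: s <= b :: t :> GRseq)%O = (b < a) || (a == b) && (s <= t :> GRseq)%O.
Proof. by rewrite lexi_cons !leEnat_dual; case: ltngtP. Qed.

Lemma ltxiGR_cons a b s t :
  (a :: s < b :: t :> GRseq)%O = (b < a) || (a == b) && (s < t :> GRseq)%O.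
Proof. by rewrite ltxi_cons !leEnat_dual; case: ltngtP. Qed.

Lemma slex_cons a b s t : slex (a :: s) (b :: t) <-> b < a \/ a = b /\ slex s t.
Proof.
split.
- case=> [[-> ->]|[[z [nz [-> ->]]]|[[|i] [/= hi1 [hi2 [ht hn]]]]]].
  + by right; split; last left.
  + by right; split; last (right; left; exists z).
  + by left.
  + case: ht => -> ht; right; split=> //; right; right; exists i.
    by rewrite !ltnS in hi1 hi2.
- case=> [lt|[-> [->|[[z [nz ->]]|[i [hi1 [hi2 [ht hn]]]]]]]].
  + by right; right; exists 0.
  + by left.
  + by right; left; exists z.
  + by right; right; exists i.+1; rewrite /= ht.
Qed.

Lemma slexE s t : slex s t <-> (s <= t :> GRseq)%O.
Proof.
elim: s t => [|a s IH] [|b t].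
- by split=> // _; left.
- by split=> // _; right; left; exists (b :: t).
- by split=> // -[//|[[z [_ //]]|[i [_ [//]]]]].
- rewrite slex_cons lexiGR_cons IH.
  by split=> [[->|[-> ->]]|/orP[->|/andP[/eqP-> ->]]]; rewrite ?eqxx ?orbT; auto.
Qed.

Lemma lexi_catr s z : (s <= s ++ z :> GRseq)%O.
Proof. by elim: s => //= a s IH; rewrite lexiGR_cons eqxx IH orbT. Qed.

Lemma lexi_rcons s t c :
  (s < t :> GRseq)%O -> all (leq^~ c) t -> (rcons s c <= t :> GRseq)%O.
Proof.
elim: s t => [|a s IH] [|b t] //=.
- by move=> _ /andP[hb _]; rewrite lexiGR_cons; case: ltngtP hb.
- rewrite ltxiGR_cons lexiGR_cons => /orP[-> //|/andP[/eqP-> st]] /andP[_ ht].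
  by rewrite eqxx (IH _ st ht) orbT.
Qed.

Definition asbool (P : Prop) : bool :=
  if excluded_middle_informative P then true else false.

Lemma asboolP (P : Prop) : reflect P (asbool P).
Proof. by rewrite /asbool; case: excluded_middle_informative => h; constructor. Qed.

Lemma ex_min_nat (P : nat -> Prop) :
  (exists n, P n) -> exists2 n, P n & forall m, P m -> n <= m.
Proof.
case=> n Pn; have exP : exists n, asbool (P n) by exists n; apply/asboolP.
by case: (ex_minnP exP) => m /asboolP Pm minm; exists m => // k /asboolP /minm.
Qed.

Lemma ex_max_nat (P : nat -> Prop) N :
  (exists n, P n) -> (forall m, P m -> m <= N) ->
  exists2 n, P n & forall m, P m -> m <= n.
Proof.
case=> n Pn PleN; have exP : exists n, asbool (P n) by exists n; apply/asboolP.
have PbleN m : asbool (P m) -> m <= N by move/asboolP/PleN.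
by case: (ex_maxnP exP PbleN) => m /asboolP Pm maxm; exists m => // k /asboolP /maxm.
Qed.

(* The maximum starts with the least head occurring in S, followed by the
   maximum of the tails behind that head. *)
Lemma ex_lexi_max K (S : seq nat -> Prop) :
  (exists s, S s) -> (forall s, S s -> size s <= K) ->
  exists2 m, S m & forall t, S t -> (t <= m :> GRseq)%O.
Proof.
elim: K S => [|K IH] S [s Ss] Ssize.
  by exists s => // t /Ssize; rewrite leqn0 => /nilP ->.
have [[b [t Sbt]]|nocons] := classic (exists b t, S (b :: t)); last first.
  by exists s => // -[|b t] // Sbt; case: nocons; exists b, t.
have [a [t0 Sat0] amin] :=
  ex_min_nat (P := fun a => exists t, S (a :: t)) (ex_intro _ b (ex_intro _ t Sbt)).
have [m Sam mmax] := IH (fun t => S (a :: t)) (ex_intro _ t0 Sat0)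
  (fun t Sat => Ssize _ Sat).
exists (a :: m) => // -[|b' t'] // Sbt'.
rewrite lexiGR_cons; have := amin b' (ex_intro _ t' Sbt').
rewrite leq_eqVlt => /orP[/eqP eab|->//].
by move: Sbt'; rewrite -eab => /mmax ->; rewrite eqxx orbT.
Qed.

Section PreAdditive.
Variable C : PreAddCat.

Lemma compm0 (X Y Z : C) (f : Hom Y Z) : comp f (0%R : Hom X Y) = 0%R.
Proof. by apply: (addrI (comp f 0%R)); rewrite -compDr !addr0. Qed.

Lemma comp0m (X Y Z : C) (f : Hom X Y) : comp (0%R : Hom Y Z) f = 0%R.
Proof. by apply: (addrI (comp 0%R f)); rewrite -compDl !addr0. Qed.

Lemma iso_zero (X Y : C) (f : Hom X Y) : IsZero X -> IsIso f -> IsZero Y.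
Proof. by move=> X0 [g [_ fg]]; rewrite /IsZero -fg -[f]compm1 X0 compm0 comp0m. Qed.

Lemma kernel_idm_zero (A X : C) (i : Hom A X) : IsKernel i (idm X) -> IsZero A.
Proof.
case; rewrite comp1m => i0 iker; have [h [_ h_uniq]] := iker A 0%R (compm0 _ _).
rewrite /IsZero (h_uniq (idm A)) ?compm1 //.
by symmetry; apply: h_uniq; rewrite compm0.
Qed.

End PreAdditive.

Section Exact.
Variable C : ExactCat.

Lemma Ex_kernel (A B D : C) (i : Hom A B) (d : Hom B D) : Ex i d -> IsKernel i d.
Proof. by case: (Ex_axioms C) => H _ /H[]. Qed.

Lemma AdmEpi_idm (X : C) : AdmEpi (@Ex C) (idm X).
Proof. by case: (Ex_axioms C) => _ [_ [_ [? _]]]. Qed.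

Lemma AdmMono_comp (X Y Z : C) (f : Hom X Y) (g : Hom Y Z) :
  AdmMono (@Ex C) f -> AdmMono (@Ex C) g -> AdmMono (@Ex C) (comp g f).
Proof. by case: (Ex_axioms C) => _ [_ [_ [_ [? _]]]]; auto. Qed.

Lemma iso_AdmMono (X Y : C) (f : Hom X Y) : IsIso f -> AdmMono (@Ex C) f.
Proof.
case=> g [gf fg]; case: (Ex_axioms C) => _ [Ex_iso [Ex_idm _]].
have [D [d Ed]] := Ex_idm X; exists D, (comp d g).
apply: (Ex_iso _ _ _ _ _ _ _ _ _ _ (idm X) f (idm D) _ _ _ _ _ Ed).
- by exists (idm X); rewrite comp1m.
- by exists g.
- by exists (idm D); rewrite comp1m.
- by rewrite !compm1.
- by rewrite comp1m -compA gf compm1.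
Qed.

Lemma SubNeqE_iso (X Y Y' : C) (f : Hom Y Y') :
  SubNeqE X Y -> IsIso f -> SubNeqE X Y'.
Proof.
move=> [j [adm_j niso_j]] fiso; have [g [gf fg]] := fiso.
exists (comp f j); split; first exact: AdmMono_comp (iso_AdmMono fiso).
case=> k [kfj fjk]; apply: niso_j; exists (comp k f); split; first by rewrite -compA.
by rewrite -[comp j _]comp1m -gf -!compA (compA f j) (compA (comp f j)) fjk comp1m.
Qed.

Lemma EChain_iso (X Y : C) (f : Hom X Y) n : IsIso f -> EChain X n -> EChain Y n.
Proof.
move=> + chain; case: chain f => [X0 X00|X' X'' m chain sub] f fiso.
- exact/EChain0/(iso_zero X00 fiso).
- exact: EChainS chain (SubNeqE_iso sub fiso).
Qed.

Lemma EChain_exists (X : C) : exists n, EChain X n.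
Proof.
have [X0|Xn0] := classic (IsZero X); first by exists 0; constructor.
have [A [i Ei]] := AdmEpi_idm X; have A0 := kernel_idm_zero (Ex_kernel Ei).
exists 1; apply: EChainS (EChain0 A0) _.
by exists i; split; [exists X, (idm X) | move/(iso_zero A0)].
Qed.

Section Finite.
Hypothesis hfin : finiteE C.

Lemma lengthE_spec (X : C) :
  EChain X (lengthE X) /\ forall m, EChain X m -> m <= lengthE X.
Proof.
have [N XleN] := hfin X; have [n Xn nmax] := ex_max_nat (EChain_exists X) XleN.
pose P n := EChain X n /\ forall m, EChain X m -> m <= n.
exact: (epsilon_spec (inhabits 0) P (ex_intro _ n (conj Xn nmax))).
Qed.

Lemma lengthE_lt (X Y : C) : SubNeqE X Y -> lengthE X < lengthE Y.
Proof. by move=> sub; apply/(lengthE_spec Y).2/EChainS/sub/(lengthE_spec X).1. Qed.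

Lemma lengthE_iso (X Y : C) (f : Hom X Y) : IsIso f -> lengthE X = lengthE Y.
Proof.
move=> fiso; have [g giso] : exists g : Hom Y X, IsIso g.
  by case: fiso => g [gf fg]; exists g, f.
apply/eqP; rewrite eqn_leq; apply/andP; split; apply: (lengthE_spec _).2.
- exact: EChain_iso fiso (lengthE_spec X).1.
- exact: EChain_iso giso (lengthE_spec Y).1.
Qed.

Lemma IndChain_inv s (X : C) : IndChain s X ->
  [/\ Indec X, s != [::], last 0 s = lengthE X,
      all (leq^~ (lengthE X)) s & size s <= (lengthE X).+1].
Proof.
elim=> [X' X'ind|s' X' Y _ [_ _ _ s'le s'size] sub Yind].
  by rewrite /= leqnn.
have lt := lengthE_lt sub.
split=> //; rewrite ?last_rcons ?all_rcons ?size_rcons ?leqnn //=.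
- by case: (s').
- by apply: sub_all s'le => n le; apply: leq_trans le (ltnW lt).
- by rewrite ltnS (leq_trans s'size lt).
Qed.

Lemma IndChain_cases s (X : C) : IndChain s X ->
  s = [:: lengthE X] \/
  exists2 X', SubNeqE X' X & exists2 s', IndChain s' X' & s = rcons s' (lengthE X).
Proof. by case=> [|s' X' Y chain sub _]; [left | right; exists X'; last exists s']. Qed.

Lemma IndChain_iso s (X Y : C) (f : Hom X Y) :
  IsIso f -> Indec Y -> IndChain s X -> IndChain s Y.
Proof.
move=> fiso Yind /IndChain_cases[->|[X' sub [s' chain ->]]];
  rewrite (lengthE_iso fiso).
- exact: IndChain1.
- exact: IndChainS chain (SubNeqE_iso sub fiso) Yind.
Qed.

Lemma muE_spec (X : C) : Indec X ->
  IndChain (muE X) X /\ forall t, IndChain t X -> (t <= muE X :> GRseq)%O.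
Proof.
move=> Xind; have [m Xm mmax] := ex_lexi_max (S := fun s => IndChain s X)
  (ex_intro _ _ (IndChain1 Xind))
  (fun s chain => let: And5 _ _ _ _ size_s := IndChain_inv chain in size_s).
pose P s := IndChain s X /\ forall t, IndChain t X -> slex t s.
have [|Xmu mumax] := epsilon_spec (inhabits [:: 0]) P.
  by exists m; split=> // t /mmax /slexE.
by split=> // t /mumax /slexE.
Qed.

Lemma last_muE (X : C) : Indec X -> last 0 (muE X) = lengthE X.
Proof. by move=> /muE_spec[/IndChain_inv[]]. Qed.

Lemma muE_mono (X Y : C) :
  Indec X -> Indec Y -> SubE X Y -> (muE X <= muE Y :> GRseq)%O.
Proof.
move=> Xind Yind [i adm_i]; have [Xmu _] := muE_spec Xind.
have [_ Ymax] := muE_spec Yind.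
have [iiso|niso] := classic (IsIso i).
  exact/Ymax/(IndChain_iso iiso Yind Xmu).
apply: le_trans (lexi_catr (muE X) [:: lengthE Y]) _.
by rewrite cats1; apply/Ymax/(IndChainS Xmu _ Yind); exists i.
Qed.

Lemma muE_le_of_proper_lt (X Y : C) :
  Indec X -> Indec Y -> lengthE Y <= lengthE X ->
  (forall X', Indec X' -> SubNeqE X' X -> (muE X' < muE Y :> GRseq)%O) ->
  (muE X <= muE Y :> GRseq)%O.
Proof.
move=> Xind Yind lYX proper_lt; have [Xmu _] := muE_spec Xind.
have [Ymu _] := muE_spec Yind; have [_ Yn0 _ Yle _] := IndChain_inv Ymu.
have YleX : all (leq^~ (lengthE X)) (muE Y).
  by apply: sub_all Yle => n le; apply: leq_trans le lYX.
case: (IndChain_cases Xmu) => [->|[X' sub [s' chain ->]]].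
  by apply: (lexi_rcons (s := [::])) YleX; rewrite ltxi0s.
have [X'ind _ _ _ _] := IndChain_inv chain; have [_ X'max] := muE_spec X'ind.
exact: lexi_rcons (le_lt_trans (X'max _ chain) (proper_lt _ X'ind sub)) YleX.
Qed.

End Finite.
End Exact.

Theorem theorem7p7 (C : ExactCat) (hfin : finiteE C) :
  (forall X Y : C, Indec X -> Indec Y -> SubE X Y -> slex (muE X) (muE Y)) /\
  (forall X Y : C, Indec X -> Indec Y -> muE X = muE Y -> lengthE X = lengthE Y) /\
  (forall X Y : C, Indec X -> Indec Y ->
     (lengthE Y <= lengthE X)%N ->
     (forall X' : C, Indec X' -> SubNeqE X' X ->
        slex (muE X') (muE Y) /\ muE X' <> muE Y) ->
     slex (muE X) (muE Y)).
Proof.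
split; [|split].
- by move=> X Y Xind Yind XY; apply/slexE/muE_mono.
- by move=> X Y Xind Yind eXY; rewrite -!last_muE // eXY.
- move=> X Y Xind Yind lYX proper_lt; apply/slexE/muE_le_of_proper_lt => //.
  move=> X' X'ind sub; have [/slexE le neq] := proper_lt X' X'ind sub.
  by rewrite lt_neqAle le andbT; apply/eqP.
Qed.
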